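(* Let $E$ be an arbitrary directed graph. For an admissible pair $(H,S)$ of $E$ let $(H,S)^\bot=(H^\bot,S^\bot)$ with $H^\bot=E^0-R(H)$ and $S^\bot=B_{H^\bot}-S$, and write $(H^{\bot\bot},S^{\bot\bot})=((H,S)^\bot)^\bot$, $(H^{\bot\bot\bot},S^{\bot\bot\bot})=(((H,S)^\bot)^\bot)^\bot$. Then the operator $\bot$ is decreasing: $(H,S)\le(G,T)$ implies $(H^\bot,S^\bot)\ge(G^\bot,T^\bot)$ for any admissible pairs $(H,S),(G,T)$. Moreover, for all admissible pairs $(H,S),(G,T)$: (1) $(H,S)\le(H^{\bot\bot},S^{\bot\bot})$; (2) $(H,S)\le(G,T)$ implies $(H^{\bot\bot},S^{\bot\bot})\le(G^{\bot\bot},T^{\bot\bot})$; (3) $(H^{\bot\bot\bot},S^{\bot\bot\bot})=(H^\bot,S^\bot)$.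
   Context: Write $u\ge v$ if there is a path (possibly of length 0) from $u$ to $v$; $R(V)=\{u\in E^0\mid u\ge v$ for some $v\in V\}$. $H\subseteq E^0$ is hereditary if $\mathbf{r}(p)\in H$ for every path $p$ with $\mathbf{s}(p)\in H$; saturated if every regular vertex $v$ (emitting a nonzero finite number of edges) with $\mathbf{r}(\mathbf{s}^{-1}(v))\subseteq H$ is in $H$. For hereditary saturated $H$, $B_H=\{v\in E^0-H\mid v$ emits infinitely many edges and $\mathbf{s}^{-1}(v)\cap\mathbf{r}^{-1}(E^0-H)$ is nonempty and finite$\}$. An admissible pair is $(H,S)$ with $H$ hereditary and saturated and $S\subseteq B_H$. Admissible pairs are partially ordered by $(H,S)\le(G,T)$ iff $H\subseteq G$ and $S\subseteq G\cup T$. For $H$ hereditary saturated, $E^0-R(H)$ is hereditary saturated, so $(H^\bot,S^\bot)$ is admissible. *)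

(* A directed graph E = (E^0, E^1, s, r) is given by
   a vertex type V, an edge type Ed, and source/range maps s r : Ed -> V.
   No finiteness or countability is assumed (arbitrary graph). *)
From Stdlib Require Import List.
Import ListNotations.
Set Implicit Arguments.

Section Graph.
Variables (V Ed : Type) (s r : Ed -> V).

Fixpoint is_path (u v : V) (p : list Ed) : Prop :=
  match p with
  | [] => u = v
  | e :: q => s e = u /\ is_path (r e) v q
  end.

Definition geq (u v : V) : Prop := exists p, is_path u v p.

Definition Rset (X : V -> Prop) : V -> Prop := fun u => exists v, X v /\ geq u v.

Definition finite_edges (P : Ed -> Prop) : Prop :=
  exists l : list Ed, forall e, P e -> In e l.

Definition emits_infinitely (v : V) : Prop := ~ finite_edges (fun e => s e = v).

Definition regular (v : V) : Prop :=
  (exists e, s e = v) /\ finite_edges (fun e => s e = v).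

Definition hereditary (H : V -> Prop) : Prop :=
  forall (p : list Ed) (u w : V), is_path u w p -> H u -> H w.

Definition saturated (H : V -> Prop) : Prop :=
  forall v, regular v -> (forall e, s e = v -> H (r e)) -> H v.

Definition B (H : V -> Prop) : V -> Prop := fun v =>
  ~ H v /\ emits_infinitely v /\
  (exists e, s e = v /\ ~ H (r e)) /\
  finite_edges (fun e => s e = v /\ ~ H (r e)).

Definition admissible (H S : V -> Prop) : Prop :=
  hereditary H /\ saturated H /\ (forall v, S v -> B H v).

Definition adm_le (H S G T : V -> Prop) : Prop :=
  (forall v, H v -> G v) /\ (forall v, S v -> G v \/ T v).

Definition Hperp (H : V -> Prop) : V -> Prop := fun v => ~ Rset H v.
Definition Sperp (H S : V -> Prop) : V -> Prop := fun v => B (Hperp H) v /\ ~ S v.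

Definition set_eq (X Y : V -> Prop) : Prop := forall v, X v <-> Y v.
End Graph.

(** Writing [X ⊥ Z] for [X ⊆ E^0 - R(Z)], everything rests on one observation:
    if [Z] is hereditary and [X ⊥ Z], a vertex [v] of [B_X] emits an edge into
    [X], hence [v ∉ Z]; so if moreover [v ∈ R(Z)], some edge of [v] enters
    [R(Z)], and [v ∈ B_{Z^⊥}] because its edges leaving [Z^⊥] are among its
    finitely many edges leaving [X].  With [X = G^⊥, Z = H] this makes [⊥]
    decreasing, with [X = H, Z = H^⊥] it gives (1); (2) is [⊥] applied twice and
    (3) follows from (1) and monotonicity by antisymmetry of [≤], since [S ⊆ B_H]
    is disjoint from [H]. *)
From Stdlib Require Import List Classical.
Import ListNotations.

Section Perp.
Context {V Ed : Type} {s r : Ed -> V}.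

Local Notation perp := (Hperp s r).
Local Notation Subset X Y := (forall v : V, X v -> Y v).

Lemma is_path_app {p q : list Ed} {u w x : V} :
  is_path s r u w p -> is_path s r w x q -> is_path s r u x (p ++ q).
Proof.
  revert u; induction p as [|e p IH]; simpl; intros u Hp Hq.
  - now subst.
  - destruct Hp as [He Hp]; split; [exact He | exact (IH _ Hp Hq)].
Qed.

Lemma Rset_self {X : V -> Prop} {v : V} : X v -> Rset s r X v.
Proof. intros Xv; exists v; split; [exact Xv | now exists []]. Qed.

Lemma Rset_step {X : V -> Prop} {v : V} :
  Rset s r X v -> ~ X v -> exists e, s e = v /\ Rset s r X (r e).
Proof.
  intros [w [Xw [[|e p] Hp]]] Xv; simpl in Hp.
  - subst; contradiction.
  - destruct Hp as [He Hp]; exists e; split; [exact He|].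
    exists w; split; [exact Xw | now exists p].
Qed.

Lemma hereditary_Hperp (H : V -> Prop) : hereditary s r (perp H).
Proof.
  intros p u w Hp Hu [x [Hx [q Hq]]]; apply Hu.
  exists x; split; [exact Hx | exists (p ++ q); exact (is_path_app Hp Hq)].
Qed.

Lemma Hperp_antitone {H G : V -> Prop} : Subset H G -> Subset (perp G) (perp H).
Proof. intros HG v Gv [w [Hw Hvw]]; apply Gv; exists w; split; [exact (HG w Hw) | exact Hvw]. Qed.

Lemma Hperp_disjoint {Z : V -> Prop} {v : V} : perp Z v -> ~ Z v.
Proof. intros Zv Zv'; exact (Zv (Rset_self Zv')). Qed.

Lemma subset_Hperp_Hperp {H : V -> Prop} :
  hereditary s r H -> Subset H (perp (perp H)).
Proof.
  intros Hh v Hv [w [Hw [p Hp]]]; exact (Hw (Rset_self (Hh p v w Hp Hv))).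
Qed.

Lemma finite_edges_sub {P Q : Ed -> Prop} :
  finite_edges P -> (forall e, Q e -> P e) -> finite_edges Q.
Proof. intros [l Hl] QP; exists l; auto. Qed.

Lemma B_edge_into {X : V -> Prop} {v : V} :
  B s r X v -> exists e, s e = v /\ X (r e).
Proof.
  intros [_ [Hinf [_ Hfin]]]; apply NNPP; intros Hnone; apply Hinf.
  apply (finite_edges_sub Hfin); intros e He; split; [exact He|].
  intros Xe; apply Hnone; now exists e.
Qed.

Lemma B_notin_hereditary {X Z : V -> Prop} {v : V} :
  hereditary s r Z -> Subset X (perp Z) -> B s r X v -> ~ Z v.
Proof.
  intros Zh XZ Bv Zv; destruct (B_edge_into Bv) as [e [He Xe]].
  apply (Hperp_disjoint (XZ _ Xe)); apply (Zh [e] v); [simpl; auto | exact Zv].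
Qed.

Lemma B_Hperp {X Z : V -> Prop} {v : V} :
  hereditary s r Z -> Subset X (perp Z) -> B s r X v -> perp Z v \/ B s r (perp Z) v.
Proof.
  intros Zh XZ Bv; destruct (classic (perp Z v)) as [Pv|Pv]; [now left | right].
  assert (RZv : Rset s r Z v) by (apply NNPP; exact Pv).
  destruct (Rset_step RZv (B_notin_hereditary Zh XZ Bv)) as [e [He RZe]].
  destruct Bv as [_ [Hinf [_ Hfin]]].
  split; [exact Pv | split; [exact Hinf | split]].
  - exists e; split; [exact He | now intros Pe].
  - apply (finite_edges_sub Hfin); intros e' [He' Pe']; split; [exact He'|].
    intros Xe'; exact (Pe' (XZ _ Xe')).
Qed.

Lemma adm_le_perp {H S G T : V -> Prop} :
  hereditary s r H -> hereditary s r G -> adm_le H S G T ->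
  adm_le (perp G) (Sperp s r G T) (perp H) (Sperp s r H S).
Proof.
  intros Hh Gh [HG SGT]; split; [exact (Hperp_antitone HG)|].
  intros v [Bv nTv].
  destruct (B_Hperp Hh (Hperp_antitone HG) Bv) as [Pv|BHv]; [now left | right].
  split; [exact BHv|].
  intros Sv; destruct (SGT v Sv) as [Gv|Tv]; [|contradiction].
  exact (B_notin_hereditary Gh (fun _ P => P) Bv Gv).
Qed.

Lemma adm_le_perp_perp {H S : V -> Prop} :
  hereditary s r H -> Subset S (B s r H) ->
  adm_le H S (perp (perp H)) (Sperp s r (perp H) (Sperp s r H S)).
Proof.
  intros Hh SB; split; [exact (subset_Hperp_Hperp Hh)|].
  intros v Sv.
  destruct (B_Hperp (hereditary_Hperp H) (subset_Hperp_Hperp Hh) (SB v Sv))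
    as [Pv|Bv]; [now left | right].
  split; [exact Bv | now intros [_ Sv']].
Qed.

Lemma adm_le_antisym {H S G T : V -> Prop} :
  (forall v, S v -> ~ H v) -> (forall v, T v -> ~ G v) ->
  adm_le H S G T -> adm_le G T H S -> set_eq H G /\ set_eq S T.
Proof.
  intros SH TG [HG SGT] [GH THS]; split; intros v; split; auto.
  - intros Sv; destruct (SGT v Sv) as [Gv|Tv]; [|exact Tv].
    exfalso; exact (SH v Sv (GH v Gv)).
  - intros Tv; destruct (THS v Tv) as [Hv|Sv]; [|exact Sv].
    exfalso; exact (TG v Tv (HG v Hv)).
Qed.

Lemma Sperp_disjoint {Z S : V -> Prop} {v : V} : Sperp s r Z S v -> ~ perp Z v.
Proof. intros [[Pv _] _]; exact Pv. Qed.

End Perp.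

Theorem proposition3p7 (V Ed : Type) (s r : Ed -> V) :
  let perpH := fun H : V -> Prop => Hperp s r H in
  let perpS := fun H S : V -> Prop => Sperp s r H S in
  (* ⊥ is decreasing *)
  (forall H S G T : V -> Prop,
      admissible s r H S -> admissible s r G T ->
      adm_le H S G T ->
      adm_le (perpH G) (perpS G T) (perpH H) (perpS H S)) /\
  (* (1) *)
  (forall H S : V -> Prop, admissible s r H S ->
      adm_le H S (perpH (perpH H)) (perpS (perpH H) (perpS H S))) /\
  (* (2) *)
  (forall H S G T : V -> Prop,
      admissible s r H S -> admissible s r G T ->
      adm_le H S G T ->
      adm_le (perpH (perpH H)) (perpS (perpH H) (perpS H S))
             (perpH (perpH G)) (perpS (perpH G) (perpS G T))) /\
  (* (3) *)
  (forall H S : V -> Prop, admissible s r H S ->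
      set_eq (perpH (perpH (perpH H))) (perpH H) /\
      set_eq (perpS (perpH (perpH H)) (perpS (perpH H) (perpS H S))) (perpS H S)).
Proof.
  intros perpH perpS; unfold perpH, perpS.
  split; [|split; [|split]].
  - intros H S G T [Hh _] [Gh _] HSGT; exact (adm_le_perp Hh Gh HSGT).
  - intros H S [Hh [_ SB]]; exact (adm_le_perp_perp Hh SB).
  - intros H S G T [Hh _] [Gh _] HSGT.
    apply adm_le_perp; try apply hereditary_Hperp.
    exact (adm_le_perp Hh Gh HSGT).
  - intros H S [Hh [_ SB]].
    apply adm_le_antisym; try (intros v; apply Sperp_disjoint).
    + apply adm_le_perp; try apply hereditary_Hperp; [exact Hh|].
      exact (adm_le_perp_perp Hh SB).
    + apply adm_le_perp_perp; [apply hereditary_Hperp | intros v [Bv _]; exact Bv].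
Qed.
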